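(* Run xOrder with criterion $F=\widehat G_0$ (i.e. $\lambda=0$). Then the output $o^*(n^a,n^b)$ is a cross-group ordering that maximizes $\mathrm{AUC}(o)$ (equivalently $\mathrm{AUC}(o)-\lambda\Delta\mathrm{xAUC}(o)$ with $\lambda=0$) over all cross-group orderings $o$ of $\mathrm{p}^a$ and $\mathrm{p}^b$.
   Context: Setting: two disjoint finite groups $a$, $b$ of samples, each sample $u$ having label $Y_u\in\{0,1\}$; $n^a,n^b$ group sizes, $n_1^a,n_0^a$ numbers of label-1/label-0 samples in $a$ (similarly for $b$), all $\ge1$, $n_1=n_1^a+n_1^b$, $n_0=n_0^a+n_0^b$, $k=n_0n_1$, $k_{a,b}=n_1^an_0^b$, $k_{b,a}=n_0^an_1^b$. Fixed within-group rankings $\mathrm{p}^a=(\mathrm{p}^{a(1)},\dots,\mathrm{p}^{a(n^a)})$, $\mathrm{p}^b=(\mathrm{p}^{b(1)},\dots,\mathrm{p}^{b(n^b)})$. A cross-group ordering is a ranked list of all samples of $a\cup b$ whose restrictions to $a,b$ are $\mathrm{p}^a,\mathrm{p}^b$; $\mathrm{AUC}(o)=\frac1{n_1n_0}\#\{(u,v):Y_u=1,Y_v=0,u\text{ above }v\text{ in }o\}$; $\mathrm{xAUC}_o(a,b)$ is the fraction of pairs (label-1 sample of $a$, label-0 sample of $b$) in which the first is ranked above the second, $\mathrm{xAUC}_o(b,a)$ symmetrically, $\Delta\mathrm{xAUC}(o)=|\mathrm{xAUC}_o(a,b)-\mathrm{xAUC}_o(b,a)|$. Partial orderings: for $0\le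 i\le n^a$, $0\le j\le n^b$, an $(i,j)$-partial ordering is a ranked list of $\mathrm{p}^{a(1)},\dots,\mathrm{p}^{a(i)},\mathrm{p}^{b(1)},\dots,\mathrm{p}^{b(j)}$ preserving the within-group orders. For such $o$ define $H_{ab}(o)$ as the number of pairs $(k,h)$ with $1\le k\le i$, $1\le h\le n^b$, $Y_{\mathrm{p}^{a(k)}}=1$, $Y_{\mathrm{p}^{b(h)}}=0$, and either $h>j$ or ($h\le j$ and $\mathrm{p}^{a(k)}$ precedes $\mathrm{p}^{b(h)}$ in $o$); and $H_{ba}(o)$ as the number of pairs $(h,k)$ with $1\le h\le j$, $1\le k\le n^a$, $Y_{\mathrm{p}^{b(h)}}=1$, $Y_{\mathrm{p}^{a(k)}}=0$, and either $k>i$ or ($k\le i$ and $\mathrm{p}^{b(h)}$ precedes $\mathrm{p}^{a(k)}$ in $o$). For $\lambda\ge0$ set $\widehat G_\lambda(o)=H_{ab}(o)+H_{ba}(o)-\lambda k\,\big|H_{ab}(o)/k_{a,b}-H_{ba}(o)/k_{b,a}\big|$, and $\widehat G_\infty(o)=-\big|H_{ab}(o)/k_{a,b}-H_{ba}(o)/k_{b,a}\big|$. (For $(i,j)=(n^a,n^b)$, $H_{ab}=k_{a,b}\mathrm{xAUC}_o(a,b)$ and $H_{ba}=k_{b,a}\mathrm{xAUC}_o(b,a)$.) xOrder with criterion $F$: set $o^*(i,0)=(\mathrm{p}^{a(1)},\dots,\mathrm{p}^{a(i)})$ and $o^*(0,j)=(\mathrm{p}^{b(1)},\dots,\mathrm{p}^{b(j)})$;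 for $i=1,\dots,n^a$ and (inner loop) $j=1,\dots,n^b$, let $c_a=o^*(i-1,j)\oplus\mathrm{p}^{a(i)}$ and $c_b=o^*(i,j-1)\oplus\mathrm{p}^{b(j)}$, where $\oplus$ appends an element at the bottom of the list, and set $o^*(i,j)=c_a$ if $F(c_a)>F(c_b)$, otherwise $o^*(i,j)=c_b$. The output is $o^*(n^a,n^b)$. *)

From mathcomp Require Import all_boot all_order all_algebra.
Set Implicit Arguments. Unset Strict Implicit. Unset Printing Implicit Defensive.
Import Order.TTheory GRing.Theory Num.Theory.
Local Open Scope ring_scope.

(* Group a is the within-group ranking
   pa = [p^{a(1)}; ...; p^{a(n^a)}] (top first), likewise pb.  Y is the label.
   x0 is a dummy default element used only for (always in-range) nth lookups. *)

Section XOrder.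
Variables (T : eqType) (x0 : T) (Y : T -> bool) (pa pb : seq T).

Definition pA (k : nat) : T := nth x0 pa k. (* p^{a(k+1)} *)
Definition pB (h : nat) : T := nth x0 pb h. (* p^{b(h+1)} *)

Definition above (o : seq T) (u v : T) : bool := (index u o < index v o)%N.

Definition cross_ordering (o : seq T) : bool :=
  [&& perm_eq o (pa ++ pb), [seq x <- o | x \in pa] == pa
    & [seq x <- o | x \in pb] == pb].

Definition n1 : nat := count Y (pa ++ pb).
Definition n0 : nat := count (predC Y) (pa ++ pb).
Definition n1a : nat := count Y pa.
Definition n0a : nat := count (predC Y) pa.
Definition n1b : nat := count Y pb.
Definition n0b : nat := count (predC Y) pb.
Definition kk : nat := (n0 * n1)%N.
Definition kab : nat := (n1a * n0b)%N.
Definition kba : nat := (n0a * n1b)%N.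

Definition AUC (o : seq T) : rat :=
  (\sum_(u <- o) \sum_(v <- o) (Y u && ~~ Y v && above o u v : nat))%N%:R
  / (n1 * n0)%N%:R.

Definition xAUC_ab (o : seq T) : rat :=
  (\sum_(u <- pa) \sum_(v <- pb) (Y u && ~~ Y v && above o u v : nat))%N%:R
  / kab%:R.
Definition xAUC_ba (o : seq T) : rat :=
  (\sum_(u <- pb) \sum_(v <- pa) (Y u && ~~ Y v && above o u v : nat))%N%:R
  / kba%:R.
Definition DxAUC (o : seq T) : rat := `|xAUC_ab o - xAUC_ba o|.

(* H_ab, H_ba for an (i,j)-partial ordering o (0-based indices:
   k < i stands for 1 <= k+1 <= i, and "h > j" becomes j <= h). *)
Definition H_ab (i j : nat) (o : seq T) : nat :=
  \sum_(k < i) \sum_(h < size pb)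
     (Y (pA k) && ~~ Y (pB h) && ((j <= h)%N || above o (pA k) (pB h)) : nat).
Definition H_ba (i j : nat) (o : seq T) : nat :=
  \sum_(h < j) \sum_(k < size pa)
     (Y (pB h) && ~~ Y (pA k) && ((i <= k)%N || above o (pB h) (pA k)) : nat).

Definition Ghat (lambda : rat) (i j : nat) (o : seq T) : rat :=
  (H_ab i j o)%:R + (H_ba i j o)%:R
  - lambda * kk%:R * `|(H_ab i j o)%:R / kab%:R - (H_ba i j o)%:R / kba%:R|.

(* xOrder with criterion F (F i j o evaluates the (i,j)-partial ordering o). *)
Section Alg.
Variable F : nat -> nat -> seq T -> rat.

(* row i.+1 of the table, given row i (prev) *)
Fixpoint xrow (prev : nat -> seq T) (i : nat) (j : nat) : seq T :=
  match j with
  | 0 => take i.+1 pa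
  | j'.+1 =>
      let ca := rcons (prev j'.+1) (pA i) in
      let cb := rcons (xrow prev i j') (pB j') in
      if F i.+1 j'.+1 cb < F i.+1 j'.+1 ca then ca else cb
  end.

Fixpoint ostar (i : nat) : nat -> seq T :=
  match i with
  | 0 => fun j => take j pb
  | i'.+1 => xrow (ostar i') i'
  end.

Definition xOrder : seq T := ostar (size pa) (size pb).
End Alg.
End XOrder.

(* With lambda = 0 the criterion is [cross_value] = H_ab + H_ba.  Appending
   the next a-sample adds a quantity depending only on (i,j), never on the
   partial ordering built so far ([cross_value_stepA/B]).  Hence the value of
   an (i+1,j+1)-interleaving is that of its (i,j+1)- or (i+1,j)-prefix plus a
   constant, and the table o*(i,j) filled by xOrder maximises the cross value
   among all (i,j)-interleavings by induction ([ostar_optimal]): this is the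
   dynamic-programming principle.

   Finally the number of correctly ranked (label 1 above label 0) pairs of
   a complete interleaving equals its cross value plus the within-group
   counts, which are fixed by pa and pb ([correct_pairs_cross], proved via
   the invariant [balanced] for partial interleavings).  So maximising the
   cross value maximises the AUC. *)

From mathcomp Require Import all_boot all_order all_algebra.
Import Order.TTheory GRing.Theory Num.Theory.
From mathcomp Require Import zify.
Set Implicit Arguments. Unset Strict Implicit. Unset Printing Implicit Defensive.

Section AboveRcons.
Variables (T : eqType) (o : seq T) (x : T).

Lemma index_rcons_mem u : u \in o -> index u (rcons o x) = index u o.
Proof. by move=> uo; rewrite -cats1 index_cat uo. Qed.

Lemma index_rcons_fresh : x \notin o -> index x (rcons o x) = size o.
Proof. by move=> xo; rewrite -cats1 index_cat (negbTE xo) /= eqxx addn0. Qed.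

Lemma above_rcons u v : u \in o -> v \in o -> above (rcons o x) u v = above o u v.
Proof. by move=> uo vo; rewrite /above !index_rcons_mem. Qed.

Lemma above_rcons_fresh u : x \notin o -> u \in o -> above (rcons o x) u x.
Proof.
by move=> xo uo; rewrite /above index_rcons_fresh // index_rcons_mem // index_mem.
Qed.

Lemma fresh_rcons_above v : x \notin o -> v \in o -> above (rcons o x) x v = false.
Proof.
move=> xo vo; rewrite /above index_rcons_fresh // index_rcons_mem //.
by apply/negbTE; rewrite -leqNgt ltnW // index_mem.
Qed.

End AboveRcons.

Section Interleavings.
Variables (T : eqType) (x0 : T) (pa pb : seq T).
Hypothesis disj_ab : ~~ has (mem pb) pa.

Inductive interleaving : nat -> nat -> seq T -> Prop :=
| interleaving0 : interleaving 0 0 [::]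
| interleavingA i j o : interleaving i j o -> i < size pa ->
    interleaving i.+1 j (rcons o (pA x0 pa i))
| interleavingB i j o : interleaving i j o -> j < size pb ->
    interleaving i j.+1 (rcons o (pB x0 pb j)).

Lemma interleaving_memA i j o : interleaving i j o -> forall k, k < i -> pA x0 pa k \in o.
Proof.
elim=> // [i' j' o' _ IH _|i' j' o' _ IH _] k lt_k; rewrite mem_rcons in_cons.
- by move: lt_k; rewrite ltnS leq_eqVlt => /orP[/eqP->|/IH->]; rewrite ?eqxx ?orbT.
- by rewrite IH ?orbT.
Qed.

Lemma interleaving_last i j o : interleaving i.+1 j.+1 o ->
  (exists2 o', interleaving i j.+1 o' & o = rcons o' (pA x0 pa i)) \/
  (exists2 o', interleaving i.+1 j o' & o = rcons o' (pB x0 pb j)).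
Proof.
by move=> HP; inversion HP; [left | right]; exists o0.
Qed.

Lemma interleaving_filter i j o : interleaving i j o ->
  [/\ perm_eq o (take i pa ++ take j pb), [seq x <- o | x \in pa] = take i pa
    & [seq x <- o | x \in pb] = take j pb].
Proof.
elim=> [|i' j' o' HP [IH1 IH2 IH3] Hi|i' j' o' HP [IH1 IH2 IH3] Hj].
- by rewrite !take0.
- have xa : pA x0 pa i' \in pa by apply: mem_nth.
  have xb : pA x0 pa i' \in pb = false.
    by apply/negP => xb; move/negP: disj_ab; apply; apply/hasP; exists (pA x0 pa i').
  rewrite !filter_rcons xa xb IH2 IH3 (take_nth x0 Hi); split => //.
  by rewrite perm_rcons -cats1 -catA perm_sym perm_catCA /= perm_cons perm_sym.
- have xb : pB x0 pb j' \in pb by apply: mem_nth.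
  have xa : pB x0 pb j' \in pa = false.
    by apply/negP => xa; move/negP: disj_ab; apply; apply/hasP; exists (pB x0 pb j').
  rewrite !filter_rcons xa xb IH2 IH3 (take_nth x0 Hj); split => //.
  by rewrite perm_rcons -[rcons (take j' pb) _]cats1 catA cats1 perm_sym perm_rcons perm_cons perm_sym.
Qed.

Lemma filter_interleaving o i j : {subset o <= pa ++ pb} ->
  [seq x <- o | x \in pa] = take i pa -> [seq x <- o | x \in pb] = take j pb ->
  i <= size pa -> j <= size pb -> interleaving i j o.
Proof.
elim/last_ind: o i j => [|o x IH] i j o_ab Fa Fb Hi Hj.
  have -> : i = 0 by move: (size_takel Hi); rewrite -Fa.
  have -> : j = 0 by move: (size_takel Hj); rewrite -Fb.
  exact: interleaving0.
have o_ab' : {subset o <= pa ++ pb}.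
  by move=> u uo; apply: o_ab; rewrite mem_rcons in_cons uo orbT.
have := o_ab x; rewrite mem_rcons mem_head mem_cat => /(_ isT) /orP[xa|xb].
- have xb : x \in pb = false.
    by apply/negP => xb; move/negP: disj_ab; apply; apply/hasP; exists x.
  rewrite filter_rcons xa in Fa; rewrite filter_rcons xb in Fb.
  case: i Fa Hi => [|i] Fa Hi; first by move: (congr1 size Fa); rewrite size_rcons take0.
  rewrite (take_nth x0 Hi) in Fa; case/rcons_inj: Fa => F1 ->.
  by apply: interleavingA => //; apply: IH => //; apply: ltnW.
- have xa : x \in pa = false.
    by apply/negP => xa; move/negP: disj_ab; apply; apply/hasP; exists x.
  rewrite filter_rcons xa in Fa; rewrite filter_rcons xb in Fb.
  case: j Fb Hj => [|j] Fb Hj; first by move: (congr1 size Fb); rewrite size_rcons take0.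
  rewrite (take_nth x0 Hj) in Fb; case/rcons_inj: Fb => F1 ->.
  by apply: interleavingB => //; apply: IH => //; apply: ltnW.
Qed.

Lemma cross_orderingP o :
  cross_ordering pa pb o <-> interleaving (size pa) (size pb) o.
Proof.
split.
  case/and3P=> perm_o /eqP Fa /eqP Fb.
  apply: filter_interleaving; rewrite ?take_size //.
  by move=> u; rewrite (perm_mem perm_o).
case/interleaving_filter; rewrite !take_size => perm_o Fa Fb.
by rewrite /cross_ordering perm_o Fa Fb !eqxx.
Qed.

Lemma interleaving_freshA i j o : uniq pa ->
  interleaving i j o -> i < size pa -> pA x0 pa i \notin o.
Proof.
move=> Ua HP Hi; have [perm_o Fa _] := interleaving_filter HP.
apply/negP => ao; have : pA x0 pa i \in [seq x <- o | x \in pa].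
  by rewrite mem_filter ao mem_nth.
rewrite Fa => a_in.
by move: (take_uniq i.+1 Ua); rewrite (take_nth x0 Hi) rcons_uniq a_in.
Qed.

Lemma interleaving_i0 i o : interleaving i 0 o -> o = take i pa.
Proof.
case/interleaving_filter; rewrite take0 cats0 => perm_o Fa _.
rewrite -Fa; apply/esym/all_filterP/allP => x.
by rewrite (perm_mem perm_o) => /mem_take.
Qed.

End Interleavings.

Section Symmetry.
Variables (T : eqType) (x0 : T).

Lemma interleaving_sym pa pb i j o :
  interleaving x0 pa pb i j o -> interleaving x0 pb pa j i o.
Proof.
elim=> [|i' j' o' _ IH Hi|i' j' o' _ IH Hj]; first exact: interleaving0.
- exact: interleavingB IH Hi.
- exact: interleavingA IH Hj.
Qed.

Lemma interleaving_takeA pa pb i : i <= size pa -> interleaving x0 pa pb i 0 (take i pa).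
Proof.
elim: i => [|i IH] Hi; first by rewrite take0; exact: interleaving0.
by rewrite (take_nth x0 Hi); apply: interleavingA => //; apply: IH; apply: ltnW.
Qed.

Variables (pa pb : seq T).

Lemma interleaving_memB i j o :
  interleaving x0 pa pb i j o -> forall h, h < j -> pB x0 pb h \in o.
Proof. by move/interleaving_sym/interleaving_memA. Qed.

Lemma interleaving_freshB i j o : ~~ has (mem pb) pa -> uniq pb ->
  interleaving x0 pa pb i j o -> j < size pb -> pB x0 pb j \notin o.
Proof.
move=> disj Ub /interleaving_sym; apply: interleaving_freshA => //.
by rewrite has_sym.
Qed.

Lemma interleaving_takeB j : j <= size pb -> interleaving x0 pa pb 0 j (take j pb).
Proof. by move/(@interleaving_takeA pb pa)/interleaving_sym. Qed.

Lemma interleaving_0j j o : ~~ has (mem pb) pa ->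
  interleaving x0 pa pb 0 j o -> o = take j pb.
Proof.
by move=> disj /interleaving_sym; apply: interleaving_i0; rewrite has_sym.
Qed.

End Symmetry.

Section CrossValue.
Variables (T : eqType) (x0 : T) (Y : T -> bool).

(* The criterion Ghat_0: number of cross-group pairs (label 1, label 0)
   counted as correctly ranked, pairs involving an unplaced sample of the
   other group being counted optimistically. *)
Definition cross_value (pa pb : seq T) (i j : nat) (o : seq T) : nat :=
  H_ab x0 Y pa pb i j o + H_ba x0 Y pa pb i j o.

Lemma H_ba_swap pa pb i j o : H_ba x0 Y pa pb i j o = H_ab x0 Y pb pa j i o.
Proof. by []. Qed.

Lemma cross_value_sym pa pb i j o : cross_value pa pb i j o = cross_value pb pa j i o.
Proof. by rewrite /cross_value addnC. Qed.

Lemma sum_negatives_from (s : seq T) (c : bool) j :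
  \sum_(h < size s) (c && ~~ Y (nth x0 s h) && (j <= h) : nat) =
  c * count (predC Y) (drop j s).
Proof.
case: c; last by rewrite mul0n big1.
rewrite mul1n; elim: s j => [|x s IH] j; first by rewrite big_ord0.
rewrite big_ord_recl; case: j => [|j].
  have -> : count (predC Y) (drop 0 (x :: s)) = ~~ Y x + count (predC Y) (drop 0 s).
    by rewrite !drop0.
  by rewrite -(IH 0); congr (_ + _); case: (Y x).
by rewrite [drop _ _]/(drop j s) -(IH j) ltn0 andbF add0n; apply: eq_bigr.
Qed.

Variables (pa pb : seq T).
Hypotheses (uniq_a : uniq pa) (uniq_b : uniq pb) (disj_ab : ~~ has (mem pb) pa).

(* Appending a(i+1) adds its optimistic credit against the unplaced b-samples,
   now realised as actual pairs. *)
Lemma H_ab_stepA i j o : interleaving x0 pa pb i j o -> i < size pa ->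
  H_ab x0 Y pa pb i.+1 j (rcons o (pA x0 pa i)) =
  H_ab x0 Y pa pb i j o + Y (pA x0 pa i) * count (predC Y) (drop j pb).
Proof.
move=> HP Hi; have HA := interleaving_memA HP; have HB := interleaving_memB HP.
have fresh := interleaving_freshA disj_ab uniq_a HP Hi.
rewrite /H_ab big_ord_recr /= -sum_negatives_from; congr (_ + _).
  apply: eq_bigr => k _; apply: eq_bigr => h _.
  by case: leqP => // lt_hj; rewrite /= above_rcons ?HA ?HB.
apply: eq_bigr => h _; case: leqP => // lt_hj.
by rewrite /= fresh_rcons_above ?andbF ?HB.
Qed.

(* Appending b(j+1) leaves H_ab unchanged: pairs with b(j+1) were already
   credited optimistically and remain correct. *)
Lemma H_ab_stepB i j o : interleaving x0 pa pb i j o -> j < size pb ->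
  H_ab x0 Y pa pb i j.+1 (rcons o (pB x0 pb j)) = H_ab x0 Y pa pb i j o.
Proof.
move=> HP Hj; have HA := interleaving_memA HP; have HB := interleaving_memB HP.
have fresh := interleaving_freshB disj_ab uniq_b HP Hj.
rewrite /H_ab; apply: eq_bigr => k _; apply: eq_bigr => h _.
case: (ltngtP h j) => [lt_hj|//|->].
- by rewrite /= above_rcons ?HA ?HB.
- by rewrite /= above_rcons_fresh ?HA.
Qed.

End CrossValue.

Section CrossValueSteps.
Variables (T : eqType) (x0 : T) (Y : T -> bool).

Lemma cross_value_stepA pa pb i j o : uniq pa -> ~~ has (mem pb) pa ->
  interleaving x0 pa pb i j o -> i < size pa ->
  cross_value x0 Y pa pb i.+1 j (rcons o (pA x0 pa i)) =
  cross_value x0 Y pa pb i j o + Y (pA x0 pa i) * count (predC Y) (drop j pb).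
Proof.
move=> Ua disj HP Hi; have disj' : ~~ has (mem pa) pb by rewrite has_sym.
rewrite /cross_value !H_ba_swap (H_ab_stepA Y Ua disj HP Hi).
by rewrite (H_ab_stepB Y Ua disj' (interleaving_sym HP) Hi) addnAC.
Qed.

Lemma cross_value_stepB pa pb i j o : uniq pb -> ~~ has (mem pb) pa ->
  interleaving x0 pa pb i j o -> j < size pb ->
  cross_value x0 Y pa pb i j.+1 (rcons o (pB x0 pb j)) =
  cross_value x0 Y pa pb i j o + Y (pB x0 pb j) * count (predC Y) (drop i pa).
Proof.
move=> Ub disj HP Hj; have disj' : ~~ has (mem pa) pb by rewrite has_sym.
by rewrite !(cross_value_sym _ _ pa) (cross_value_stepA Ub disj' (interleaving_sym HP) Hj).
Qed.

Lemma Ghat0_value pa pb i j o :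
  (Ghat x0 Y pa pb 0 i j o = (cross_value x0 Y pa pb i j o)%:R)%R.
Proof. by rewrite /Ghat !mul0r subr0 natrD. Qed.

End CrossValueSteps.

Section XOrderOptimal.
Variables (T : eqType) (x0 : T) (Y : T -> bool) (pa pb : seq T).
Hypotheses (uniq_a : uniq pa) (uniq_b : uniq pb) (disj_ab : ~~ has (mem pb) pa).
Variable F : nat -> nat -> seq T -> rat.
Hypothesis F_ltE : forall i j o o',
  (F i j o < F i j o')%R = (cross_value x0 Y pa pb i j o < cross_value x0 Y pa pb i j o').

Let value := cross_value x0 Y pa pb.
Let ostarF := ostar x0 pa pb F.

Lemma ostar_step i j : ostarF i.+1 j.+1 =
  let ca := rcons (ostarF i j.+1) (pA x0 pa i) in
  let cb := rcons (ostarF i.+1 j) (pB x0 pb j) in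
  if (F i.+1 j.+1 cb < F i.+1 j.+1 ca)%R then ca else cb.
Proof. by []. Qed.

Lemma ostar_optimal i j : i <= size pa -> j <= size pb ->
  interleaving x0 pa pb i j (ostarF i j) /\
  forall o, interleaving x0 pa pb i j o -> value i j o <= value i j (ostarF i j).
Proof.
elim: i j => [|i IHi] j Hi Hj.
  split; first exact: interleaving_takeB.
  by move=> o /(interleaving_0j disj_ab) ->.
elim: j Hj => [|j IHj] Hj.
  split; first exact: interleaving_takeA.
  by move=> o /(interleaving_i0 disj_ab) ->.
have [Pa Ma] := IHi j.+1 (ltnW Hi) Hj.
have [Pb Mb] := IHj (ltnW Hj).
have Pca := interleavingA Pa Hi; have Pcb := interleavingB Pb Hj.
rewrite ostar_step /= F_ltE.
set ca := rcons _ (pA x0 pa i); set cb := rcons _ (pB x0 pb j).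
have le_best o : interleaving x0 pa pb i.+1 j.+1 o ->
    value i.+1 j.+1 o <= maxn (value i.+1 j.+1 ca) (value i.+1 j.+1 cb).
  case/interleaving_last => [[o' Po' ->]|[o' Po' ->]]; rewrite leq_max.
  - by rewrite /value !(cross_value_stepA _ uniq_a disj_ab) // leq_add2r Ma.
  - rewrite /value !(cross_value_stepB _ uniq_b disj_ab) // leq_add2r.
    by apply/orP; right; apply: Mb.
case: ltnP => cmp; split => // o /le_best.
- by move/leq_trans; apply; rewrite geq_max leqnn ltnW.
- by move/leq_trans; apply; rewrite geq_max leqnn cmp.
Qed.

End XOrderOptimal.

Section CorrectPairs.
Variables (T : eqType) (Y : T -> bool).

Definition correct_pairs (o : seq T) : nat :=
  \sum_(u <- o) \sum_(v <- o) (Y u && ~~ Y v && above o u v : nat).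

Lemma sum_count (o : seq T) : \sum_(u <- o) (Y u : nat) = count Y o.
Proof. by rewrite -sumn_count sumnE big_map. Qed.

(* A fresh sample appended at the bottom is below all label-1 samples. *)
Lemma correct_pairs_rcons o x : x \notin o ->
  correct_pairs (rcons o x) = correct_pairs o + ~~ Y x * count Y o.
Proof.
move=> xo; rewrite /correct_pairs big_rcons /= big_rcons /= andbN /= addn0.
rewrite [X in _ + X = _]big1_seq ?addn0; last first.
  by move=> v /andP[_ vo]; rewrite fresh_rcons_above // andbF.
rewrite -sum_count big_distrr /= -big_split /=.
apply: eq_big_seq => u uo; rewrite big_rcons /= above_rcons_fresh //.
congr (_ + _); last by case: (Y u); case: (Y x).
by apply: eq_big_seq => v vo; rewrite above_rcons.
Qed.

Lemma correct_pairs_take (x0 : T) s i : uniq s -> i < size s ->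
  correct_pairs (take i.+1 s) =
  correct_pairs (take i s) + ~~ Y (nth x0 s i) * count Y (take i s).
Proof.
move=> Us Hi; have := take_uniq i.+1 Us; rewrite (take_nth x0 Hi) rcons_uniq.
by case/andP=> fresh _; rewrite correct_pairs_rcons.
Qed.

End CorrectPairs.

Section Balance.
Variables (T : eqType) (x0 : T) (Y : T -> bool).

(* Invariant of (i,j)-interleavings relating correct pairs and cross value:
   both sides count within-group pairs, placed cross pairs and the optimistic
   credits for unplaced samples. *)
Definition balanced (pa pb : seq T) (i j : nat) (o : seq T) : Prop :=
  correct_pairs Y o + count Y (take i pa) * count (predC Y) (drop j pb)
    + count Y (take j pb) * count (predC Y) (drop i pa) =
  cross_value x0 Y pa pb i j o + correct_pairs Y (take i pa) + correct_pairs Y (take j pb).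

Lemma balanced_sym pa pb i j o : balanced pa pb i j o -> balanced pb pa j i o.
Proof. by rewrite /balanced cross_value_sym; lia. Qed.

Lemma interleaving_count pa pb i j o : ~~ has (mem pb) pa ->
  interleaving x0 pa pb i j o -> count Y o = count Y (take i pa) + count Y (take j pb).
Proof.
by move=> disj /(interleaving_filter disj) [/permP perm_o _ _]; rewrite perm_o count_cat.
Qed.

Lemma balanced_stepA pa pb i j o : uniq pa -> ~~ has (mem pb) pa ->
  interleaving x0 pa pb i j o -> i < size pa ->
  balanced pa pb i j o -> balanced pa pb i.+1 j (rcons o (pA x0 pa i)).
Proof.
move=> Ua disj HP Hi; rewrite /balanced (drop_nth x0 Hi).
rewrite correct_pairs_rcons ?(interleaving_freshA disj Ua HP Hi) //.
rewrite (cross_value_stepA Y Ua disj HP Hi) (correct_pairs_take Y x0 Ua Hi).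
rewrite (interleaving_count disj HP) (take_nth x0 Hi) -cats1 count_cat /=.
by rewrite /pA; case: (Y (nth x0 pa i)) => /=; nia.
Qed.

Lemma interleaving_balanced pa pb i j o : uniq pa -> uniq pb -> ~~ has (mem pb) pa ->
  interleaving x0 pa pb i j o -> balanced pa pb i j o.
Proof.
move=> Ua Ub disj; have disj' : ~~ has (mem pa) pb by rewrite has_sym.
elim=> [|i' j' o' HP IH Hi|i' j' o' HP IH Hj].
- by rewrite /balanced !take0 /cross_value /H_ab /H_ba !big_ord0 /correct_pairs !big_nil.
- exact: balanced_stepA.
- by apply/balanced_sym/balanced_stepA => //; [exact: interleaving_sym | exact: balanced_sym].
Qed.

Lemma correct_pairs_cross pa pb o : uniq pa -> uniq pb -> ~~ has (mem pb) pa ->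
  interleaving x0 pa pb (size pa) (size pb) o ->
  correct_pairs Y o =
  cross_value x0 Y pa pb (size pa) (size pb) o + correct_pairs Y pa + correct_pairs Y pb.
Proof.
move=> Ua Ub disj /(interleaving_balanced Ua Ub disj).
by rewrite /balanced !drop_size !take_size /= !muln0 !addn0.
Qed.

End Balance.

Local Open Scope ring_scope.

Theorem theorem1 (T : eqType) (x0 : T) (Y : T -> bool) (pa pb : seq T) :
  uniq pa -> uniq pb -> ~~ has (mem pb) pa ->
  (0 < count Y pa)%N -> (0 < count (predC Y) pa)%N ->
  (0 < count Y pb)%N -> (0 < count (predC Y) pb)%N ->
  let o := xOrder x0 pa pb (Ghat x0 Y pa pb 0) in
  cross_ordering pa pb o /\
  forall o' : seq T, cross_ordering pa pb o' -> AUC Y pa pb o' <= AUC Y pa pb o.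
Proof.
move=> Ua Ub disj _ _ _ _ o.
have G_ltE i j o1 o2 : (Ghat x0 Y pa pb 0 i j o1 < Ghat x0 Y pa pb 0 i j o2) =
    (cross_value x0 Y pa pb i j o1 < cross_value x0 Y pa pb i j o2)%N.
  by rewrite !Ghat0_value ltr_nat.
have [opt_o best_o] := ostar_optimal Ua Ub disj G_ltE (leqnn (size pa)) (leqnn (size pb)).
split; first exact/(cross_orderingP x0 disj).
move=> o' /(cross_orderingP x0 disj) opt_o'.
rewrite /AUC ler_wpM2r ?invr_ge0 ?ler0n // ler_nat.
change (correct_pairs Y o' <= correct_pairs Y o)%N.
rewrite (correct_pairs_cross Y Ua Ub disj opt_o') (correct_pairs_cross Y Ua Ub disj opt_o).
by rewrite !leq_add2r best_o.
Qed.
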